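(* Let $V$ be a finite set with positive element weights ($\vert A \vert$ = total weight of $A \subseteq V$), and let $\mathcal{P}, \mathcal{P}'$ be partitions of $V$ into nonempty parts with $\vert \mathcal{P}' \vert \ge 2$. Define $\phi^* : 2^{\mathcal{P}} \to \mathbb{R}_{\ge 0}$ by $\phi^*(\mathcal{S}) = 0$ if $\mathcal{S} \in \{\emptyset, \mathcal{P}\}$ and $\phi^*(\mathcal{S}) = \min_{\emptyset \ne \mathcal{S}' \subsetneq \mathcal{P}'} \vert U_{\mathcal{S}} \triangle U_{\mathcal{S}'} \vert$ otherwise. Then $\phi^*$ is symmetric, i.e. $\phi^*(\mathcal{S}) = \phi^*(\mathcal{P} \setminus \mathcal{S})$ for all $\mathcal{S} \subseteq \mathcal{P}$; and $\phi^*$ is not submodular in general, i.e. there exist $V$, $\mathcal{P}$, $\mathcal{P}'$ and $\mathcal{S}, \mathcal{T} \subseteq \mathcal{P}$ with $\phi^*(\mathcal{S} \cup \mathcal{T}) > \phi^*(\mathcal{S}) + \phi^*(\mathcal{T}) - \phi^*(\mathcal{S} \cap \mathcal{T})$.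
   Context: $U_{\mathcal{S}}$ denotes the union of the sets in $\mathcal{S}$; $\triangle$ is symmetric difference. *)

From mathcomp Require Import all_boot all_order all_algebra.
Set Implicit Arguments. Unset Strict Implicit. Unset Printing Implicit Defensive.
Import Order.TTheory GRing.Theory Num.Theory.
Local Open Scope ring_scope.

Section Defs.
Variables (R : realFieldType) (V : finType) (w : V -> R).

Definition wt (A : {set V}) : R := \sum_(x in A) w x.

Definition symdiff (A B : {set V}) : {set V} := (A :\: B) :|: (B :\: A).

(* The minimum is taken as a finite bigop of
   Num.min with initial value wt [set: V]; since every symmetric difference
   has weight ≤ wt [set: V] (w ≥ 0) and the index range is nonempty when
   #|P'| ≥ 2, this is exactly the minimum. *)
Definition phistar (P P' S : {set {set V}}) : R :=
  if (S == set0) || (S == P) then 0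
  else \big[Num.min/wt [set: V]]_(S' in powerset P' | (S' != set0) && (S' != P'))
         wt (symdiff (cover S) (cover S')).
End Defs.

From mathcomp Require Import all_boot all_order all_algebra.
From mathcomp Require Import lra.
Set Implicit Arguments. Unset Strict Implicit. Unset Printing Implicit Defensive.
Import Order.TTheory GRing.Theory Num.Theory.
Local Open Scope ring_scope.

(* Complementing a subfamily S of P complements its union, and a symmetric
   difference is unchanged when one argument is complemented together with the
   other; as S' |-> P' \ S' permutes the nonempty proper subfamilies of P', the
   minima defining phi*(S) and phi*(P \ S) range over the same values.
   For the failure of submodularity take V = {a, b, c} with weights 1, 1, 2,
   P the singletons and P' = {{a}, {b, c}}: the blocks {a} and {c} are at
   distance 0 and 1 from cuts of P', but their union {a, c} is at distance 2
   from both cuts. *)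

Section Symdiff.
Variable T : finType.
Implicit Types A B X : {set T}.

Lemma symdiff_compl A B : symdiff (~: A) B = symdiff A (~: B).
Proof. by apply/setP => x; rewrite !inE; case: (x \in A); case: (x \in B). Qed.

Lemma symdiffK A : involutive (symdiff A).
Proof. by move=> X; apply/setP => x; rewrite !inE; case: (x \in A); case: (x \in X). Qed.

Lemma symdiff_subset A X : X \subset A -> symdiff A X = A :\: X.
Proof. by rewrite /symdiff -setD_eq0 => /eqP->; rewrite setU0. Qed.

Lemma subset_symdiff A X : (symdiff A X \subset A) = (X \subset A).
Proof. by rewrite subUset subsetDl -!setD_eq0 setDDl setUid. Qed.

Lemma setD_eq0_subset A X : X \subset A -> (A :\: X == set0) = (X == A).
Proof. by move=> sXA; rewrite setD_eq0 eqEsubset sXA. Qed.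

Lemma setD_eql_subset A X : X \subset A -> (A :\: X == A) = (X == set0).
Proof.
move=> sXA; apply/eqP/eqP => [AX|->]; last exact: setD0.
apply/setP => x; rewrite inE; apply/negbTE/negP => xX.
by have := subsetP sXA x xX; rewrite -{1}AX inE xX.
Qed.

Lemma proper_nonempty_symdiff A X :
  [&& symdiff A X \subset A, symdiff A X != set0 & symdiff A X != A]
  = [&& X \subset A, X != set0 & X != A].
Proof.
rewrite subset_symdiff; case: (boolP (X \subset A)) => //= sXA.
by rewrite symdiff_subset // setD_eq0_subset // setD_eql_subset // andbC.
Qed.

End Symdiff.

Lemma coverD (T : finType) (P S : {set {set T}}) :
  trivIset P -> S \subset P -> cover (P :\: S) = cover P :\: cover S.
Proof.
move=> /trivIsetP tiP sSP; apply/setP => x; rewrite inE.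
apply/bigcupP/andP => [[A /setDP[AP AnS] xA]|[xnS /bigcupP[A AP xA]]].
  split; last by apply/bigcupP; exists A.
  apply/bigcupP => -[B BS xB]; have BP := subsetP sSP B BS.
  have AB : A != B by apply: contraNneq AnS => ->.
  by have /pred0P/(_ x) := tiP A B AP BP AB; rewrite /= xA xB.
by exists A; rewrite // inE AP andbT; apply: contra xnS => AS; apply/bigcupP; exists A.
Qed.

Lemma phistar_setDC (R : realFieldType) (V : finType) (w : V -> R)
    (P P' S : {set {set V}}) :
  partition P [set: V] -> partition P' [set: V] -> S \subset P ->
  phistar w P P' (P :\: S) = phistar w P P' S.
Proof.
move=> partP partP' sSP; rewrite /phistar.
rewrite setD_eq0_subset // setD_eql_subset // orbC; case: ifP => // _.
(* on subfamilies of P', [symdiff P'] is the complement S' |-> P' :\: S' *)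
rewrite [RHS](reindex_inj (inv_inj (symdiffK P'))) /=.
apply: eq_big => [X|X]; first by rewrite !powersetE proper_nonempty_symdiff.
rewrite powersetE => /andP[sXP' _].
have [/eqP covP tiP _] := and3P partP; have [/eqP covP' tiP' _] := and3P partP'.
by rewrite (symdiff_subset sXP') !coverD // covP covP' !setTD symdiff_compl.
Qed.

Section Partitions.
Variable T : finType.
Implicit Types A X : {set T}.

Lemma partition_set1 : partition [set [set x] | x : T] [set: T].
Proof.
apply/and3P; split.
- apply/eqP/setP => x; rewrite inE; apply/bigcupP; exists [set x]; last exact: set11.
  exact: imset_f.
- apply/trivIsetP => _ _ /imsetP[x _ ->] /imsetP[y _ ->] xy.
  by rewrite disjoints1 inE; apply: contraNneq xy => ->.
- by apply/imsetP => -[x _ /setP/(_ x)]; rewrite !inE eqxx.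
Qed.

Lemma partition_setC A : A != set0 -> A != [set: T] -> partition [set A; ~: A] [set: T].
Proof.
move=> A0 AT; apply/and3P; split.
- by rewrite /cover bigcup_setU !big_set1 setUCr.
- apply/trivIsetP => X Y; rewrite !inE => /orP[]/eqP-> /orP[]/eqP-> //;
    rewrite ?eqxx // => _; by rewrite disjoints_subset ?setCK.
- by rewrite !inE negb_or eq_sym A0 -setCT (inj_eq (@setC_inj T)) eq_sym.
Qed.

Lemma cover_set2 A X : cover [set A; X] = A :|: X.
Proof. by rewrite /cover bigcup_setU !big_set1. Qed.

End Partitions.

Lemma proper_nonempty_subset_set2 (T : finType) (X : {set T}) a b :
  X \subset [set a; b] -> X != set0 -> X != [set a; b] -> X = [set a] \/ X = [set b].
Proof.
move=> sXab X0 Xab; have sX z : z \in X -> z = a \/ z = b by move/(subsetP sXab)/set2P.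
have [aX|aNX] := boolP (a \in X); [left|right]; apply/setP => z; rewrite inE.
- apply/idP/eqP => [zX|->//]; case: (sX z zX) => // zb.
  by case/negP: Xab; rewrite eqEsubset sXab; apply/subsetP => u /set2P[]->; rewrite -?zb.
- apply/idP/eqP => [zX|->]; first by case: (sX z zX) => // za; rewrite -za zX in aNX.
  by case/set0Pn: X0 => y yX; case: (sX y yX) => [ya|<-//]; rewrite -ya yX in aNX.
Qed.

Lemma phistar_set0 (R : realFieldType) (V : finType) (w : V -> R) (P P' : {set {set V}}) :
  phistar w P P' set0 = 0.
Proof. by rewrite /phistar eqxx. Qed.

Section PhistarBounds.
Variables (R : realFieldType) (V : finType) (w : V -> R) (P P' S : {set {set V}}).
Hypotheses (S0 : S != set0) (SP : S != P).

Lemma phistar_le_symdiff (S' : {set {set V}}) : S' \subset P' -> S' != set0 -> S' != P' ->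
  phistar w P P' S <= wt w (symdiff (cover S) (cover S')).
Proof.
by move=> sS'P' S'0 S'P'; rewrite /phistar (negbTE S0) (negbTE SP);
  apply: bigmin_le_cond; rewrite powersetE sS'P' S'0 S'P'.
Qed.

Lemma le_phistar (c : R) : c <= wt w [set: V] ->
  (forall S' : {set {set V}}, S' \subset P' -> S' != set0 -> S' != P' ->
     c <= wt w (symdiff (cover S) (cover S'))) ->
  c <= phistar w P P' S.
Proof.
rewrite /phistar (negbTE S0) (negbTE SP) => cV cS'.
by apply: le_bigmin => // S'; rewrite powersetE => /and3P[]; apply: cS'.
Qed.

End PhistarBounds.

Section Counterexample.
Variable R : realFieldType.

Definition a3 : 'I_3 := @Ordinal 3 0 isT.
Definition b3 : 'I_3 := @Ordinal 3 1 isT.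
Definition c3 : 'I_3 := @Ordinal 3 2 isT.

Definition w3 (x : 'I_3) : R := if x == c3 then 2 else 1.
Definition P3 := [set [set x] | x : 'I_3].
Definition P3' := [set [set a3]; ~: [set a3]].

Lemma wt_w3 (E : {set 'I_3}) :
  wt w3 E = (if a3 \in E then 1 else 0) + (if b3 \in E then 1 else 0)
            + (if c3 \in E then 2 else 0).
Proof.
rewrite /wt big_mkcond /= !big_ord_recl big_ord0 addr0 addrA.
have -> : lift ord0 (lift ord0 ord0) = c3 by apply/val_inj.
have -> : lift ord0 ord0 = b3 by apply/val_inj.
have -> : ord0 = a3 by apply/val_inj.
by rewrite /w3; case: (a3 \in E); case: (b3 \in E); case: (c3 \in E).
Qed.

Lemma w3_gt0 x : 0 < w3 x.
Proof. by rewrite /w3; case: ifP. Qed.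

Lemma partition_P3' : partition P3' [set: 'I_3].
Proof.
apply: partition_setC; first by apply/set0Pn; exists a3; rewrite inE.
by apply/negP => /eqP/setP/(_ b3); rewrite !inE.
Qed.

Lemma card_P3' : #|P3'| = 2.
Proof.
rewrite cards2; case: eqP => // /setP/(_ a3).
by rewrite !inE.
Qed.

Lemma P3_set1 x : [set x] \in P3.
Proof. exact: imset_f. Qed.

Lemma set1_proper_P3' X : X \in P3' ->
  [&& [set X] \subset P3', [set X] != set0 & [set X] != P3'].
Proof.
move=> XP3'; rewrite sub1set XP3' -card_gt0 cards1 /=.
by apply: contraTneq isT => eX; have := card_P3'; rewrite -eX cards1.
Qed.

Lemma neq_P3 (S : {set {set 'I_3}}) : [set b3] \notin S -> S != P3.
Proof. by apply: contraNneq => ->; apply: P3_set1. Qed.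

Lemma phistar_set1_le x X : x != b3 -> X \in P3' ->
  phistar w3 P3 P3' [set [set x]] <= wt w3 (symdiff [set x] X).
Proof.
move=> xb XP3'; have /and3P[sP' n0 nP'] := set1_proper_P3' XP3'.
have S0 : [set [set x]] != set0 by apply/set0Pn; exists [set x]; rewrite inE.
have SP : [set [set x]] != P3 by apply: neq_P3; rewrite inE (inj_eq set1_inj) eq_sym.
by rewrite -[in X in _ <= X](cover1 [set x]) -(cover1 X) phistar_le_symdiff.
Qed.

Lemma phistar_c3_le1 : phistar w3 P3 P3' [set [set c3]] <= 1.
Proof.
apply: le_trans (phistar_set1_le _ (set22 _ _)) _ => //.
by rewrite wt_w3 !inE /=; lra.
Qed.

Lemma phistar_a3_le0 : phistar w3 P3 P3' [set [set a3]] <= 0.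
Proof.
apply: le_trans (phistar_set1_le _ (set21 _ _)) _ => //.
by rewrite wt_w3 !inE /=; lra.
Qed.

Lemma phistar_a3c3_ge2 : 2 <= phistar w3 P3 P3' ([set [set c3]] :|: [set [set a3]]).
Proof.
apply: le_phistar; first by apply/set0Pn; exists [set c3]; rewrite !inE eqxx.
- by apply: neq_P3; rewrite !inE !(inj_eq set1_inj).
- by rewrite wt_w3 !inE /=; lra.
move=> S' sS'P' S'0 S'P'.
by case: (proper_nonempty_subset_set2 sS'P' S'0 S'P') => ->;
  rewrite cover1 cover_set2 wt_w3 !inE /=; lra.
Qed.

Lemma phistar_not_submodular :
  phistar w3 P3 P3' ([set [set c3]] :|: [set [set a3]]) >
    phistar w3 P3 P3' [set [set c3]] + phistar w3 P3 P3' [set [set a3]]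
    - phistar w3 P3 P3' ([set [set c3]] :&: [set [set a3]]).
Proof.
have -> : [set [set c3]] :&: [set [set a3]] = set0.
  by apply/setP => X; rewrite !inE; case: eqP => // ->; rewrite (inj_eq set1_inj).
rewrite phistar_set0.
have := phistar_c3_le1; have := phistar_a3_le0; have := phistar_a3c3_ge2; lra.
Qed.

End Counterexample.

Theorem proposition8 (R : realFieldType) :
  (forall (V : finType) (w : V -> R), (forall x, 0 < w x) ->
     forall P P' : {set {set V}},
       partition P [set: V] -> partition P' [set: V] -> (2 <= #|P'|)%N ->
       forall S : {set {set V}}, S \subset P ->
         phistar w P P' S = phistar w P P' (P :\: S))
  /\
  (exists (V : finType) (w : V -> R) (P P' S T : {set {set V}}),
     [/\ (forall x, 0 < w x), partition P [set: V], partition P' [set: V],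
         (2 <= #|P'|)%N & [/\ S \subset P, T \subset P &
         phistar w P P' (S :|: T) >
           phistar w P P' S + phistar w P P' T - phistar w P P' (S :&: T)]]).
Proof.
split.
  by move=> V w _ P P' partP partP' _ S sSP; rewrite phistar_setDC.
exists 'I_3, (@w3 R), P3, P3', [set [set c3]], [set [set a3]]; split.
- exact: w3_gt0.
- exact: partition_set1.
- exact: partition_P3'.
- by rewrite card_P3'.
- by rewrite !sub1set !P3_set1; split=> //; apply: phistar_not_submodular.
Qed.
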